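(* Let $\sigma=(a_1,\ldots,a_s)$ be an $r$-good partition of $r$ and let $H=H(n,r,q\mid\sigma)$. Let $A,B$ be disjoint sets with $A\cup B=\{1,\ldots,s\}$ such that, with $a=\sum_{j\in A}a_j$ and $b=\sum_{j\in B}a_j$, one has $\gcd(a,b)=\gcd(a,r)=\gcd(b,r)=1$, and let $L=\mathrm{lcm}(a,b)$. If $r\mid n$ and $L\mid q$, then $H$ has a perfect matching, that is, $\nu(H)=\frac{nq}{r}$.
   Context: A $\sigma$-hypergraph $H=H(n,r,q\mid\sigma)$, for a partition $\sigma$ of $r$, is the $r$-uniform hypergraph whose vertex set is the disjoint union of $n$ classes $V_1,\ldots,V_n$, each of size $q$; an $r$-subset $K$ of vertices is an edge iff the multiset of non-zero values $|K\cap V_i|$ equals $\sigma$. The partition $\sigma$ is $r$-good if there is a subsequence $\pi$ of $(a_1,\ldots,a_s)$ (a selection of some of the parts, by index) such that $\sum_{a_j\in\pi}a_j$ is coprime to $r$. A perfect matching is a set of pairwise vertex-disjoint edges covering every vertex; $\nu(H)$ is the maximum size of a matching. *)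

From mathcomp Require Import all_boot.
Set Implicit Arguments. Unset Strict Implicit. Unset Printing Implicit Defensive.

Definition is_partition (r : nat) (sigma : seq nat) : bool :=
  all (fun x => 0 < x) sigma && (sumn sigma == r).

Definition r_good (r : nat) (sigma : seq nat) : Prop :=
  exists m : bitseq, coprime (sumn (mask m sigma)) r.

(* Vertices of H(n,r,q|sigma): pairs (class i, element within class). *)
Definition vtx (n q : nat) := ('I_n * 'I_q)%type.

Definition vclass (n q : nat) (i : 'I_n) : {set vtx n q} :=
  [set v | v.1 == i].

Definition sigma_edge (n r q : nat) (sigma : seq nat) (K : {set vtx n q}) : bool :=
  (#|K| == r) &&
  perm_eq [seq x <- [seq #|K :&: vclass q i| | i <- enum 'I_n] | x != 0] sigma.

Definition is_matching (n r q : nat) (sigma : seq nat) (M : {set {set vtx n q}}) : bool :=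
  [forall K in M, sigma_edge r sigma K] && trivIset M.

Definition is_perfect_matching (n r q : nat) (sigma : seq nat)
    (M : {set {set vtx n q}}) : bool :=
  is_matching r sigma M && (cover M == [set: vtx n q]).

From mathcomp Require Import all_boot zify.
Set Implicit Arguments. Unset Strict Implicit. Unset Printing Implicit Defensive.

(* Write r = a + b and split the n = N r classes into N blocks of r classes, the first a
   of each block reserved for the parts in A and the last b for those in B.  The k-th of
   the q edges of a block (k < q) sends the i-th part of A to class k + i (mod a) and the
   i-th part of B to class a + (k + i mod b).  As k runs over q values, a multiple of a,
   every A-class receives each part of A exactly q/a times, i.e. (q/a) a = q vertices;
   likewise for the B-classes.  So the prescribed intersection sizes add up to exactly q
   in every class, and the edges can be realised disjointly, covering every vertex. *)

Lemma sum_shift_mod m x (F : nat -> nat) :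
  \sum_(0 <= k < m) F ((k + x) %% m) = \sum_(0 <= k < m) F k.
Proof.
elim: x => [|x IHx].
  by apply: eq_big_nat => k /andP[_ km]; rewrite addn0 modn_small.
case: m IHx => [|m] IHx; first by rewrite !big_geq.
rewrite -IHx big_nat_recr //= [RHS]big_nat_recl //= addnC.
by rewrite addnS -addSn modnDl add0n; congr (_ + _); apply: eq_bigr => k _; rewrite addnS.
Qed.

Lemma sum_periodic Q m x (F : nat -> nat) :
  \sum_(0 <= k < Q * m) F ((k + x) %% m) = Q * \sum_(0 <= k < m) F k.
Proof.
elim: Q => [|Q IHQ]; first by rewrite big_geq.
rewrite !mulSn (big_cat_nat (n := m)) ?leq_addr // sum_shift_mod; congr (_ + _).
rewrite -{1}(add0n m) big_addn addKn -IHQ.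
by apply: eq_bigr => k _; rewrite addnAC modnDr.
Qed.

Lemma sum_residue_eq m q x d :
  m %| q -> d < m -> \sum_(k < q) ((k + x) %% m == d) = q %/ m.
Proof.
move=> /dvdnP[Q ->] dm; have m_gt0 : 0 < m by apply: leq_ltn_trans dm.
rewrite mulnK // -(big_mkord xpredT (fun k => nat_of_bool ((k + x) %% m == d))).
rewrite (sum_periodic Q m x (fun y => nat_of_bool (y == d))) big_mkord.
rewrite (bigD1 (Ordinal dm)) //= eqxx big1 ?muln1 //.
by move=> k /negbTE nk; rewrite -val_eqE /= in nk; rewrite nk.
Qed.

Lemma card_tag_eq (I : finType) (T_ : I -> finType) (i0 : I) :
  #|[set t : {i : I & T_ i} | tag t == i0]| = #|T_ i0|.
Proof.
have -> : [set t : {i : I & T_ i} | tag t == i0] = Tagged T_ @: [set: T_ i0].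
  apply/setP => -[i x]; rewrite inE /=; apply/eqP/imsetP => [ii0|[y _ /(congr1 tag) //]].
  by case: i0 / ii0; exists x.
by rewrite card_imset ?cardsT // => x y /eqP; rewrite eq_Tagged => /eqP.
Qed.

Lemma sum_tag (I : finType) (T_ : I -> finType) (G : I -> nat) :
  \sum_(t : {i : I & T_ i}) G (tag t) = \sum_i G i * #|T_ i|.
Proof.
rewrite (partition_big (fun t => tag t) xpredT) //=; apply: eq_bigr => i _.
rewrite (eq_bigr (fun _ => G i)) => [|t /eqP <- //].
by rewrite sum_nat_const -card_tag_eq mulnC; congr (_ * _); apply: eq_card => t; rewrite inE.
Qed.

Lemma card_fibers (W I : finType) q (f : W -> I) :
  (forall i, #|[set x | f x == i]| = q) -> #|W| = #|I| * q.
Proof.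
move=> fiber_q; rewrite -sum1_card (partition_big f xpredT) //=.
rewrite (eq_bigr (fun _ => q)) ?sum_nat_const //.
by move=> i _; rewrite -(fiber_q i) -sum1dep_card; apply: eq_bigl => x.
Qed.

Lemma fiber_bijection (W I : finType) q (f : W -> I) :
  (forall i, #|[set x | f x == i]| = q) ->
  exists2 h : W -> I * 'I_q, bijective h & forall x, (h x).1 = f x.
Proof.
move=> fiber_q.
suff [h h_inj hf] : exists2 h : W -> I * 'I_q, injective h & forall x, (h x).1 = f x.
  by exists h => //; apply: inj_card_bij; rewrite // (card_fibers fiber_q) card_prod card_ord.
case: q fiber_q => [|q] fiber_q.
  have W0 (x : W) : False.
    by move/eqP: (fiber_q (f x)); rewrite cards_eq0 => /eqP/setP/(_ x); rewrite !inE eqxx.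
  by exists (fun x => match W0 x with end) => x; case: (W0 x).
pose fiber x := enum [set y | f y == f x].
have rank_lt x : index x (fiber x) < q.+1.
  by rewrite -(fiber_q (f x)) cardE index_mem mem_enum inE.
exists (fun x => (f x, inord (index x (fiber x)))) => // x y [fxy] /(congr1 val).
rewrite /= !inordK // /fiber fxy; apply: (index_inj x); rewrite mem_enum inE ?fxy //.
Qed.

Lemma perm_nonzero_counts (I J : finType) (w : J -> nat) (phi : J -> I) (f : I -> nat) :
  injective phi -> (forall j, 0 < w j) -> (forall j, f (phi j) = w j) ->
  (forall i, i \notin codom phi -> f i = 0) ->
  perm_eq [seq x <- [seq f i | i <- enum I] | x != 0] [seq w j | j <- enum J].
Proof.
move=> phi_inj w_gt0 f_phi f_out; apply/permP => P.
rewrite count_filter !count_map -!size_filter -!cardE.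
transitivity #|phi @: [set j | P (w j)]|.
  apply: eq_card => i.
  rewrite [in LHS]unfold_in /=; apply/andP/imsetP => [[Pfi fi_neq0]|[j]].
    have [/codomP[j ij]|/f_out fi0] := boolP (i \in codom phi); last by rewrite fi0 in fi_neq0.
    by exists j; rewrite // inE -f_phi -ij.
  by rewrite inE => Pwj ->; rewrite f_phi -lt0n w_gt0.
by rewrite card_imset //; apply: eq_card => j; rewrite inE.
Qed.

Lemma map_nth_enum_ord (T : Type) (x0 : T) (s : seq T) :
  [seq nth x0 s j | j : 'I_(size s) <- enum 'I_(size s)] = s.
Proof. by rewrite (map_comp (nth x0 s) val) val_enum_ord map_nth_iota0 ?take_size. Qed.

Lemma index_enum_lt_sum (I : finType) (w : I -> nat) (B : {set I}) j :
  (forall i, 0 < w i) -> j \in B -> index j (enum B) < \sum_(i in B) w i.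
Proof.
move=> w_gt0 jB; apply: leq_trans (_ : #|B| <= _); first by rewrite cardE index_mem mem_enum.
by rewrite -sum1_card leq_sum.
Qed.

Lemma eqn_mulDmod g c o i : o < c -> (g * c + o == i) = (g == i %/ c) && (o == i %% c).
Proof.
move=> o_lt_c; have c_gt0 : 0 < c by apply: leq_ltn_trans o_lt_c.
apply/eqP/andP => [<-|[/eqP-> /eqP->]]; last by rewrite -divn_eq.
by rewrite divnMDl // divn_small // addn0 modnMDl modn_small.
Qed.

Section ScheduledMatching.

(* Edge e puts its j-th part into class phi e j; an edge is realised as a set of
   vertices indexed by part, the vertex (j, t) being the t-th one of the j-th part.
   phi_load says that every class then has to host exactly q vertices. *)
Variables (n q : nat) (sigma : seq nat) (E : finType).
Local Notation w := (nth 0 sigma).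
Local Notation part := {j : 'I_(size sigma) & 'I_(w j)}.
Variable phi : E -> 'I_(size sigma) -> 'I_n.
Hypothesis w_gt0 : forall j : 'I_(size sigma), 0 < w j.
Hypothesis phi_inj : forall e, injective (phi e).
Hypothesis phi_load : forall i, \sum_e \sum_(j | phi e j == i) w j = q.

Let place (x : E * part) : 'I_n := phi x.1 (tag x.2).

Let card_place_fiber i : #|[set x | place x == i]| = q.
Proof.
rewrite -(phi_load i) -sum1dep_card big_mkcond.
transitivity (\sum_e \sum_(t : part) if phi e (tag t) == i then 1 else 0).
  by rewrite pair_big; apply: eq_bigr => -[e t].
apply: eq_bigr => e _.
rewrite (sum_tag (fun j : 'I_(size sigma) => 'I_(w j)) (fun j => if phi e j == i then 1 else 0)).
by rewrite [RHS]big_mkcond /=; apply: eq_bigr => j _; rewrite card_ord; case: ifP; rewrite ?mul1n.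
Qed.

Let card_fst_eq (P : pred part) e :
  #|[set x : E * part | (x.1 == e) && P x.2]| = #|[set t | P t]|.
Proof.
have -> : [set x : E * part | (x.1 == e) && P x.2] = setX [set e] [set t | P t].
  by apply/setP => -[e' t]; rewrite !inE.
by rewrite cardsX cards1 mul1n.
Qed.

Section Blocks.

Variable h : E * part -> 'I_n * 'I_q.
Hypothesis h_bij : bijective h.
Hypothesis h_place : forall x, (h x).1 = place x.

Let h_inj : injective h := bij_inj h_bij.

Lemma card_block_class e i :
  #|h @: [set x | x.1 == e] :&: vclass q i| = #|[set t : part | phi e (tag t) == i]|.
Proof.
rewrite -(card_fst_eq (fun t => phi e (tag t) == i) e) -(card_imset _ h_inj).
apply: eq_card => v; rewrite !inE; apply/andP/imsetP => [[/imsetP[x /[!inE] ex ->] hx]|].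
  exists x => //; rewrite inE ex -(eqP ex).
  by rewrite -[phi _ _]/(place x) -h_place.
case=> x /[!inE] /andP[ex hx] ->; split; first by rewrite imset_f ?inE.
by rewrite h_place /place (eqP ex).
Qed.

Lemma card_block e : #|h @: [set x | x.1 == e]| = sumn sigma.
Proof.
have -> : [set x : E * part | x.1 == e] = [set x | (x.1 == e) && predT x.2].
  by apply/setP => x; rewrite !inE andbT.
rewrite card_imset // card_fst_eq (eq_card (B := predT)) => [|t]; last by rewrite inE.
by rewrite card_tagged (eq_map (fun j : 'I_(size sigma) => card_ord (w j))) map_nth_enum_ord.
Qed.

Lemma block_sigma_edge e : sigma_edge (sumn sigma) sigma (h @: [set x | x.1 == e]).
Proof.
rewrite /sigma_edge card_block eqxx (eq_map (card_block_class e)) /=.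
suff : perm_eq [seq x <- [seq #|[set t : part | phi e (tag t) == i]| | i <- enum 'I_n] | x != 0]
               [seq w j | j : 'I_(size sigma) <- enum 'I_(size sigma)] by rewrite map_nth_enum_ord.
apply: (perm_nonzero_counts (w := fun j : 'I_(size sigma) => w j) (@phi_inj e)) => //.
  move=> j; rewrite -[RHS](card_ord (w j)) -(card_tag_eq (fun j : 'I_(size sigma) => 'I_(w j))).
  by apply: eq_card => t; rewrite !inE (inj_eq (@phi_inj e)).
move=> i i_out; apply: eq_card0 => t; rewrite inE; apply: contraNF i_out => /eqP <-.
exact: codom_f.
Qed.

Lemma blocks_perfect_matching :
  is_perfect_matching (sumn sigma) sigma
    [set h @: B | B : {set E * part} in preim_partition fst [set: E * part]].
Proof.
have [/eqP cover_fibers triv_fibers _] := and3P (preim_partitionP fst [set: E * part]).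
rewrite /is_perfect_matching /is_matching imset_trivIset // triv_fibers andbT.
apply/andP; split.
  apply/forall_inP => _ /imsetP[_ /imsetP[x _ ->] ->].
  have -> : [set y in [set: E * part] | x.1 == y.1] = [set y | y.1 == x.1].
    by apply/setP => y; rewrite !inE eq_sym.
  exact: block_sigma_edge.
rewrite cover_imset -imset_cover cover_fibers; apply/eqP/setP => v.
by case: h_bij => g hK gK; rewrite inE -[v]gK imset_f.
Qed.

End Blocks.

Lemma scheduled_perfect_matching :
  exists M : {set {set vtx n q}}, is_perfect_matching (sumn sigma) sigma M.
Proof.
have [h h_bij h_place] := fiber_bijection card_place_fiber.
by eexists; exact: blocks_perfect_matching h_bij h_place.
Qed.

End ScheduledMatching.

Section CyclicSchedule.

Variables (N q : nat) (sigma : seq nat) (A : {set 'I_(size sigma)}).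
Local Notation w := (nth 0 sigma).
Hypothesis w_gt0 : forall j : 'I_(size sigma), 0 < w j.
Let a := \sum_(j in A) w j.
Let b := \sum_(j in ~: A) w j.

Definition slot (k : nat) (j : 'I_(size sigma)) : nat :=
  if j \in A then (k + index j (enum A)) %% a else a + (k + index j (enum (~: A))) %% b.

Let rankA_lt j : j \in A -> index j (enum A) < a.
Proof. exact: index_enum_lt_sum. Qed.

Let rankB_lt j : j \notin A -> index j (enum (~: A)) < b.
Proof. by rewrite -in_setC; apply: index_enum_lt_sum. Qed.

Lemma slot_lt k j : slot k j < a + b.
Proof.
rewrite /slot; case: ifPn => [/rankA_lt | /rankB_lt] rank_lt.
  by rewrite (leq_trans (ltn_pmod _ _)) ?leq_addr //; apply: leq_ltn_trans rank_lt.
by rewrite ltn_add2l ltn_pmod //; apply: leq_ltn_trans rank_lt.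
Qed.

Lemma slot_inj k : injective (slot k).
Proof.
move=> j1 j2; rewrite /slot.
case: ifPn => [/[dup] jA1 /rankA_lt r1 | /[dup] jB1 /rankB_lt r1];
  case: ifPn => [/[dup] jA2 /rankA_lt r2 | /[dup] jB2 /rankB_lt r2].
- move/eqP; rewrite eqn_modDl !modn_small // => /eqP.
  by apply: (index_inj j1); rewrite mem_enum.
- by have := ltn_pmod (k + index j1 (enum A)) (leq_ltn_trans (leq0n _) r1); lia.
- by have := ltn_pmod (k + index j2 (enum A)) (leq_ltn_trans (leq0n _) r2); lia.
- move/addnI/eqP; rewrite eqn_modDl !modn_small // => /eqP.
  by apply: (index_inj j1); rewrite mem_enum inE.
Qed.

Hypotheses (a_dvd_q : a %| q) (b_dvd_q : b %| q).

Lemma sum_slot_eq j c : c < a + b ->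
  \sum_(k < q) (slot k j == c) =
    if j \in A then (c < a) * (q %/ a) else (a <= c) * (q %/ b).
Proof.
move=> c_lt; rewrite /slot; case: ifPn => [/rankA_lt | /rankB_lt] rank_lt.
  case: ltnP => [c_lt_a | a_le_c]; first by rewrite mul1n sum_residue_eq.
  by rewrite mul0n big1 // => k _; rewrite ltn_eqF // (leq_trans _ a_le_c) // ltn_pmod //; lia.
case: leqP => [a_le_c | c_lt_a]; last by rewrite mul0n big1 // => k _; rewrite gtn_eqF ?ltn_addr.
rewrite mul1n -(sum_residue_eq (index j (enum (~: A))) b_dvd_q (_ : c - a < b)); last by lia.
by apply: eq_bigr => k _; congr nat_of_bool; apply/eqP/eqP; lia.
Qed.

Lemma block_load c :
  c < a + b -> \sum_(j < size sigma) w j * \sum_(k < q) (slot k j == c) = q.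
Proof.
move=> c_lt; rewrite (bigID (mem A)) /=.
rewrite (eq_bigr (fun j : 'I_(size sigma) => w j * ((c < a) * (q %/ a)))) => [|j jA];
  last by rewrite sum_slot_eq ?jA.
rewrite [X in _ + X](eq_bigr (fun j : 'I_(size sigma) => w j * ((a <= c) * (q %/ b))))
  => [|j /negbTE jB]; last by rewrite sum_slot_eq ?jB.
rewrite -!big_distrl /= -/a (eq_bigl (mem (~: A))) => [|j]; last by rewrite !inE.
rewrite -/b; case: ltnP => _; rewrite ?mul1n ?mul0n ?muln0 ?addn0 ?add0n mulnC divnK //.
Qed.

Let ab_gt0 (i : 'I_(N * (a + b))) : 0 < a + b.
Proof. by move: (val i) (ltn_ord i) => m; case: (a + b); rewrite ?muln0. Qed.

Lemma schedule_lt (g : 'I_N) k j : g * (a + b) + slot k j < N * (a + b).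
Proof.
apply: leq_trans (_ : g.+1 * (a + b) <= _).
  by rewrite mulSn [_ + slot _ _]addnC ltn_add2r slot_lt.
by rewrite leq_mul2r ltn_ord orbT.
Qed.

Definition cyclic_schedule (e : 'I_N * 'I_q) (j : 'I_(size sigma)) : 'I_(N * (a + b)) :=
  Ordinal (schedule_lt e.1 e.2 j).

Lemma cyclic_schedule_inj e : injective (cyclic_schedule e).
Proof. by move=> j1 j2 /(congr1 val) /addnI; apply: slot_inj. Qed.

Lemma count_cyclic_schedule j (i : 'I_(N * (a + b))) :
  \sum_e (cyclic_schedule e j == i) = \sum_(k < q) (slot k j == i %% (a + b)).
Proof.
have g0_lt : i %/ (a + b) < N by rewrite ltn_divLR ?(ab_gt0 i).
transitivity (\sum_(g : 'I_N) \sum_(k < q) (cyclic_schedule (g, k) j == i)).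
  by rewrite pair_big; apply: eq_big => // -[g k].
rewrite (bigD1 (Ordinal g0_lt)) //= [X in _ + X]big1 ?addn0 => [|g g_neq].
  by apply: eq_bigr => k _; rewrite -val_eqE /= eqn_mulDmod ?slot_lt // eqxx.
apply: big1 => k _; rewrite -val_eqE /= eqn_mulDmod ?slot_lt //.
by move: g_neq; rewrite -val_eqE /= => /negbTE ->.
Qed.

Lemma cyclic_schedule_load i : \sum_e \sum_(j | cyclic_schedule e j == i) w j = q.
Proof.
rewrite -[RHS](block_load (ltn_pmod i (ab_gt0 i))).
rewrite (eq_bigr (fun e => \sum_j (cyclic_schedule e j == i) * w j)) => [|e _]; last first.
  by rewrite big_mkcond; apply: eq_bigr => j _; case: eqP; rewrite ?mul1n.
rewrite exchange_big; apply: eq_bigr => j _.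
by rewrite -big_distrl count_cyclic_schedule [in RHS]mulnC.
Qed.

End CyclicSchedule.

Theorem lemma3p9 (n r q : nat) (sigma : seq nat) (A : {set 'I_(size sigma)}) :
  is_partition r sigma ->
  r_good r sigma ->
  let a := \sum_(j in A) nth 0 sigma j in
  let b := \sum_(j in ~: A) nth 0 sigma j in
  gcdn a b = 1 -> gcdn a r = 1 -> gcdn b r = 1 ->
  r %| n -> lcmn a b %| q ->
  exists M : {set {set vtx n q}}, is_perfect_matching r sigma M.
Proof.
move=> /andP[/allP sigma_gt0 /eqP <-] _ a b _ _ _ r_dvd_n ab_dvd_q.
have w_gt0 (j : 'I_(size sigma)) : 0 < nth 0 sigma j by apply/sigma_gt0/mem_nth.
have sumn_ab : sumn sigma = a + b.
  rewrite sumnE (big_nth 0) big_mkord (bigID (mem A)) /=.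
  by congr (_ + _); apply: eq_bigl => j; rewrite inE.
have [N ->] : exists N, n = N * (a + b) by exists (n %/ sumn sigma); rewrite -sumn_ab divnK.
have a_dvd_q : a %| q := dvdn_trans (dvdn_lcml a b) ab_dvd_q.
have b_dvd_q : b %| q := dvdn_trans (dvdn_lcmr a b) ab_dvd_q.
exact: scheduled_perfect_matching w_gt0 (@cyclic_schedule_inj _ _ _ _ w_gt0)
  (cyclic_schedule_load w_gt0 a_dvd_q b_dvd_q).
Qed.
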